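(* For each random context grammar $G$ there is a random context grammar $G'$ with $L(G')=L(G)$ such that every production $(A\to x,\mathit{Per},\mathit{For})$ of $G'$ satisfies $A\notin\mathit{For}$.
   Context: For an alphabet $V$, $V^+=V^*-\{\lambda\}$, and $\mathit{alph}(w)$ is the set of symbols occurring in $w$. A random context grammar is a quadruple $G=(N,T,P,S)$ where $N$ and $T$ are disjoint finite alphabets of nonterminals and terminals, $V=N\cup T$, $S\in N$, and $P$ is a finite set of productions $(A\to x,\mathit{Per},\mathit{For})$ with $A\in N$, $x\in V^+$ (no erasing productions), $\mathit{Per},\mathit{For}\subseteq N$. For $u,v\in V^*$, $uAv\Rightarrow uxv$ holds if $\mathit{Per}\subseteq\mathit{alph}(uv)$ and $\mathit{alph}(uv)\cap\mathit{For}=\emptyset$. $L(G)=\{w\in T^*:S\Rightarrow^*w\}$. *)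

From mathcomp Require Import all_boot.
From Stdlib Require Import Relations.
From Stdlib Require List.
Set Implicit Arguments. Unset Strict Implicit. Unset Printing Implicit Defensive.

(* Symbols of V = N ∪ T: the disjoint union N + T (inl = nonterminal, inr = terminal). *)
Definition sym (N T : finType) := (N + T)%type.

Record production (N T : finType) := Production {
  lhs : N;
  rhs : seq (sym N T);
  per : {set N};
  forb : {set N} }.

Record rcg (N T : finType) := RCG {
  prods : seq (production N T);
  start : N }.

Definition rcg_wf (N T : finType) (G : rcg N T) : Prop :=
  forall p, List.In p (prods G) -> rhs p <> [::].

Definition alphN (N T : finType) (w : seq (sym N T)) : {set N} :=
  [set A | inl A \in w].

Definition step (N T : finType) (G : rcg N T) (s t : seq (sym N T)) : Prop :=
  exists p u v, [/\ List.In p (prods G),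
    s = u ++ inl (lhs p) :: v,
    t = u ++ rhs p ++ v,
    per p \subset alphN (u ++ v) &
    [disjoint alphN (u ++ v) & forb p]].

Definition derives (N T : finType) (G : rcg N T) := clos_refl_trans _ (step G).

Definition lang (N T : finType) (G : rcg N T) (w : seq T) : Prop :=
  derives G [:: inl (start G)] (map inr w).

From mathcomp Require Import all_boot.
From Stdlib Require Import Relations.
Set Implicit Arguments. Unset Strict Implicit. Unset Printing Implicit Defensive.

(* Every production (A -> x, Per, For) is split in two. The first rewrites A
   into a fresh marker A_i, checking Per and For minus A, and forbidding every
   marker; the second rewrites A_i into x and checks only that A is absent when
   A is in For. Neither rule forbids its own left-hand side. Since the first
   rules are blocked while a marker is present, a sentential form carries at
   most one marker, and the context it saw when it was introduced is still the
   context when it fires; projecting A_i back to A therefore turns derivations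
   of the new grammar into derivations of the old one. *)

Lemma inP (X : eqType) (x : X) (s : seq X) : reflect (List.In x s) (x \in s).
Proof.
elim: s => [|y s IHs] /=; first by constructor.
rewrite in_cons; apply: (iffP orP) => [[/eqP ->|/IHs]|[->|/IHs]]; by [left|right].
Qed.

Lemma disjointP (X : finType) (A B : {pred X}) :
  reflect (forall x, x \in A -> x \in B -> False) [disjoint A & B].
Proof.
apply: (iffP idP) => [AB x xA|AB_false]; first by rewrite (disjointFr AB xA).
by rewrite disjoint_subset; apply/subsetP => x xA; apply/negP => /(AB_false x xA).
Qed.

Lemma clos_rt_simulation (X Y : Type) (R : relation X) (R' : relation Y)
    (P : X -> Prop) (f : X -> Y) :
  (forall s t, R s t -> P s -> P t /\ clos_refl_trans _ R' (f s) (f t)) ->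
  forall s t, clos_refl_trans _ R s t -> P s ->
    P t /\ clos_refl_trans _ R' (f s) (f t).
Proof.
move=> sim s t; elim=> {s t} [s t /sim //|s Ps|s t r _ IHst _ IHtr Ps].
  by split=> //; apply: rt_refl.
have [Pt fst] := IHst Ps; have [Pr ftr] := IHtr Pt.
by split=> //; apply: rt_trans fst ftr.
Qed.

Section SplitProductions.

Variables (N T : finType) (G : rcg N T).

Notation k := (List.length (prods G)).
(* [inr i] is the marker A_i of the [i]-th production. *)
Notation NM := (N + 'I_k)%type.
Notation marker i := (inl (inr i) : sym NM T).

Definition dummy_prod : production N T := Production (start G) [::] set0 set0.

Definition prod_at (i : 'I_k) : production N T := List.nth i (prods G) dummy_prod.

Lemma prod_at_In i : List.In (prod_at i) (prods G).
Proof. by apply: List.nth_In; apply/ltP. Qed.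

Lemma In_prod_at p : List.In p (prods G) -> exists i, prod_at i = p.
Proof.
case/(List.In_nth _ _ dummy_prod) => n [/ltP lt_n_k <-].
by exists (Ordinal lt_n_k).
Qed.

Definition lift_sym (X : sym N T) : sym NM T :=
  match X with inl A => inl (inl A) | inr a => inr a end.

Definition proj_sym (X : sym NM T) : sym N T :=
  match X with
  | inl (inl A) => inl A
  | inl (inr i) => inl (lhs (prod_at i))
  | inr a => inr a
  end.

Definition unmarked (X : sym NM T) : bool :=
  if X is inl (inr _) then false else true.

Definition mark_rule i : production NM T :=
  Production (inl (lhs (prod_at i))) [:: marker i]
    [set X | if X is inl B then B \in per (prod_at i) else false]
    [set X | if X is inl B then B \in forb (prod_at i) :\ lhs (prod_at i)
             else true].

Definition fire_rule i : production NM T :=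
  Production (inr i) (map lift_sym (rhs (prod_at i))) set0
    [set X | if X is inl B
             then (B \in forb (prod_at i)) && (B == lhs (prod_at i))
             else false].

Definition split_rcg : rcg NM T :=
  RCG (List.flat_map (fun i => [:: mark_rule i; fire_rule i]) (enum 'I_k))
      (inl (start G)).

Lemma In_split_rcg p :
  List.In p (prods split_rcg) <-> exists i, p = mark_rule i \/ p = fire_rule i.
Proof.
rewrite List.in_flat_map; split=> [[i [_ /= [<-|[<-|[]]]]]|[i p_i]].
- by exists i; left.
- by exists i; right.
exists i; split; first by apply/inP; rewrite mem_enum.
by case: p_i => ->; [left|right; left].
Qed.

Lemma split_rcg_wf : rcg_wf G -> rcg_wf split_rcg.
Proof.
move=> wfG p /In_split_rcg [i [->|->]] //=.
by have := wfG _ (prod_at_In i); case: (rhs (prod_at i)).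
Qed.

Lemma split_rcg_lhs_notin_forb p :
  List.In p (prods split_rcg) -> lhs p \notin forb p.
Proof. by case/In_split_rcg=> i [->|->]; rewrite /= !inE ?eqxx. Qed.

Lemma map_proj_lift w : map proj_sym (map lift_sym w) = w.
Proof. by elim: w => //= [[A|a]] w ->. Qed.

Lemma all_unmarked_lift w : all unmarked (map lift_sym w).
Proof. by elim: w => //= [[A|a]] w ->. Qed.

Lemma mem_lift_nonterm A w : (inl (inl A) \in map lift_sym w) = (inl A \in w).
Proof. by elim: w => //= [[B|a]] w IHw; rewrite !in_cons IHw. Qed.

Lemma mem_lift_marker i w : (marker i \in map lift_sym w) = false.
Proof. by elim: w => //= [[B|a]] w IHw; rewrite !in_cons IHw. Qed.

Lemma mem_proj_unmarked A w :
  all unmarked w -> (inl A \in map proj_sym w) = (inl (inl A) \in w).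
Proof.
elim: w => //= X w IHw /andP [X_unmarked w_unmarked].
by rewrite !in_cons IHw //; case: X X_unmarked => [[B|j]|a].
Qed.

Lemma marker_split_uniq u1 v1 u2 v2 i j :
  all unmarked u1 -> all unmarked v1 ->
  u1 ++ marker i :: v1 = u2 ++ marker j :: v2 -> [/\ u1 = u2, i = j & v1 = v2].
Proof.
elim: u1 u2 => [|X u1 IHu1] [|Y u2] //= u1_unmarked v1_unmarked.
- by case=> -> ->.
- by case=> <- v1E; move: v1_unmarked; rewrite v1E all_cat /= andbF.
- by case=> XE; move: u1_unmarked; rewrite XE.
case=> -> /IHu1; case/andP: u1_unmarked => _ /[swap] /[apply].
by case/(_ v1_unmarked) => -> -> ->.
Qed.

(* The part of the context condition of [prod_at i] that [mark_rule i] has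
   already checked, read on the projected context. *)
Definition checked_context i (w : seq (sym N T)) :=
  per (prod_at i) \subset alphN w /\
  [disjoint alphN w & forb (prod_at i) :\ lhs (prod_at i)].

Definition marked_ok (s : seq (sym NM T)) :=
  forall u v i, s = u ++ marker i :: v ->
    all unmarked (u ++ v) /\ checked_context i (map proj_sym (u ++ v)).

Lemma unmarked_marked_ok s : all unmarked s -> marked_ok s.
Proof.
by move=> s_unmarked u v i sE; move: s_unmarked; rewrite sE all_cat /= andbF.
Qed.

Lemma mark_rule_marked_ok i u v :
  per (mark_rule i) \subset alphN (u ++ v) ->
  [disjoint alphN (u ++ v) & forb (mark_rule i)] ->
  marked_ok (u ++ marker i :: v).
Proof.
move=> per_uv forb_uv.
have uv_unmarked : all unmarked (u ++ v).
  apply/allP => -[[B|j]|a] // j_uv.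
  have j_alph : inr j \in alphN (u ++ v) by rewrite inE.
  by move: (disjointFr forb_uv j_alph); rewrite inE.
have := uv_unmarked; rewrite all_cat => /andP [u_unmarked v_unmarked].
move=> u' v' j /(marker_split_uniq u_unmarked v_unmarked) [<- <- <-].
split=> //; split.
- apply/subsetP => B B_per; rewrite inE (mem_proj_unmarked _ uv_unmarked).
  by have := subsetP per_uv (inl B); rewrite !inE; apply.
apply/disjointP => B; rewrite inE (mem_proj_unmarked _ uv_unmarked) => B_uv.
have B_alph : inl B \in alphN (u ++ v) by rewrite inE.
by move: (disjointFr forb_uv B_alph); rewrite !inE => ->.
Qed.

Lemma fire_rule_step i u v :
  marked_ok (u ++ marker i :: v) ->
  [disjoint alphN (u ++ v) & forb (fire_rule i)] ->
  step G (map proj_sym (u ++ marker i :: v))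
         (map proj_sym (u ++ rhs (fire_rule i) ++ v)).
Proof.
move=> /(_ u v i erefl) [uv_unmarked [per_uv forb_uv]] forb_fire.
exists (prod_at i), (map proj_sym u), (map proj_sym v); split.
- exact: prod_at_In.
- by rewrite map_cat.
- by rewrite !map_cat map_proj_lift.
- by rewrite -map_cat.
rewrite -map_cat; apply/disjointP => B B_uv B_forb.
case: (eqVneq B (lhs (prod_at i))) => [B_lhs|B_not_lhs].
- have B_alph : inl B \in alphN (u ++ v) 
    by move: B_uv; rewrite !inE mem_proj_unmarked.
  by move: (disjointFr forb_fire B_alph); rewrite !inE B_forb B_lhs eqxx.
by move: (disjointFr forb_uv B_uv); rewrite !inE B_not_lhs B_forb.
Qed.

Lemma split_rcg_step_proj s t :
  step split_rcg s t -> marked_ok s ->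
  marked_ok t /\ derives G (map proj_sym s) (map proj_sym t).
Proof.
case=> p [u] [v] [/In_split_rcg [i [->|->]] -> -> per_uv forb_uv] s_ok.
  split; first exact: mark_rule_marked_ok.
  by rewrite !map_cat; apply: rt_refl.
split; last by apply: rt_step; apply: fire_rule_step.
have [uv_unmarked _] := s_ok u v i erefl.
move: uv_unmarked; rewrite all_cat => /andP [u_unmarked v_unmarked].
by apply: unmarked_marked_ok; rewrite !all_cat u_unmarked v_unmarked all_unmarked_lift.
Qed.

Lemma mark_rule_lift_step i u v :
  per (prod_at i) \subset alphN (u ++ v) ->
  [disjoint alphN (u ++ v) & forb (prod_at i)] ->
  step split_rcg (map lift_sym (u ++ inl (lhs (prod_at i)) :: v))
                 (map lift_sym u ++ marker i :: map lift_sym v).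
Proof.
move=> per_uv forb_uv.
exists (mark_rule i), (map lift_sym u), (map lift_sym v); split => //.
- by apply/In_split_rcg; exists i; left.
- by rewrite map_cat.
- apply/subsetP => -[B|j]; rewrite !inE // -map_cat mem_lift_nonterm => B_per.
  by have := subsetP per_uv B B_per; rewrite inE.
apply/disjointP => -[B|j]; rewrite !inE -map_cat ?mem_lift_marker //.
rewrite mem_lift_nonterm => B_uv /andP [_ B_forb].
have B_alph : B \in alphN (u ++ v) by rewrite inE.
by move: (disjointFr forb_uv B_alph); rewrite B_forb.
Qed.

Lemma fire_rule_lift_step i u v :
  [disjoint alphN (u ++ v) & forb (prod_at i)] ->
  step split_rcg (map lift_sym u ++ marker i :: map lift_sym v)
                 (map lift_sym (u ++ rhs (prod_at i) ++ v)).
Proof.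
move=> forb_uv.
exists (fire_rule i), (map lift_sym u), (map lift_sym v); split => //.
- by apply/In_split_rcg; exists i; right.
- by rewrite !map_cat.
- exact: sub0set.
apply/disjointP => -[B|j]; rewrite !inE -map_cat ?mem_lift_marker //.
rewrite mem_lift_nonterm => B_uv /andP [B_forb _].
have B_alph : B \in alphN (u ++ v) by rewrite inE.
by move: (disjointFr forb_uv B_alph); rewrite B_forb.
Qed.

Lemma step_lift s t :
  step G s t -> derives split_rcg (map lift_sym s) (map lift_sym t).
Proof.
case=> p [u] [v] [/In_prod_at [i <-] -> -> per_uv forb_uv].
apply: rt_trans; apply: rt_step.
- exact: mark_rule_lift_step.
- exact: fire_rule_lift_step.
Qed.

Lemma derives_lift s t :
  derives G s t -> derives split_rcg (map lift_sym s) (map lift_sym t).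
Proof.
have simulation s' t' (st' : step G s' t') (_ : True) := conj I (step_lift st').
by move=> st; have [] := clos_rt_simulation simulation st I.
Qed.

Lemma derives_proj s t :
  derives split_rcg s t -> marked_ok s -> derives G (map proj_sym s) (map proj_sym t).
Proof. by move=> st /(clos_rt_simulation split_rcg_step_proj st) []. Qed.

Lemma split_rcg_lang w : lang split_rcg w <-> lang G w.
Proof.
split=> derivation.
- have start_ok : marked_ok [:: inl (start split_rcg)] by apply: unmarked_marked_ok.
  by have := derives_proj derivation start_ok; rewrite -map_comp.
by have := derives_lift derivation; rewrite -map_comp.
Qed.

End SplitProductions.

Theorem lemma1 (N T : finType) (G : rcg N T) :
  rcg_wf G ->
  exists (N' : finType) (G' : rcg N' T),
    [/\ rcg_wf G',
        (forall p, List.In p (prods G') -> lhs p \notin forb p) &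
        (forall w : seq T, lang G' w <-> lang G w)].
Proof.
move=> wfG; exists _, (split_rcg G); split.
- exact: split_rcg_wf.
- exact: split_rcg_lhs_notin_forb.
- exact: split_rcg_lang.
Qed.
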